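(* Let $n\ge 3$ and let $V$ be an optimal acyclic matching on $\Delta^n$. Let $\rho(V)$ be the set of pairs $(\sigma,\tau)\in V$ with $\dim\tau\le n-2$ (i.e. the pairs of $V$ lying in the $(n-2)$-skeleton $\Delta^n_{(n-2)}$). Then $\rho(V)$ is an optimal acyclic matching on $\Delta^n_{(n-2)}$ with exactly one critical vertex and exactly $n$ critical $(n-2)$-dimensional simplices (and no other critical simplices).
   Context: All simplicial complexes are finite abstract simplicial complexes; simplices are nonempty. $\Delta^n$ is the simplicial complex of all nonempty subsets of an $(n+1)$-element vertex set; $\Delta^n_{(k)}$ denotes its $k$-skeleton. The Hasse diagram $\mathcal{H}(K)$ of $K$ is the directed graph whose vertices are the simplices of $K$, with an edge $\sigma\to\tau$ whenever $\sigma\subsetneq\tau$ and $\dim\tau=\dim\sigma+1$. A matching on $\mathcal{H}(K)$ is a set $W$ of edges of $\mathcal{H}(K)$, no two sharing a vertex; an edge $\sigma\to\tau$ in $W$ is called a pair $(\sigma,\tau)$, and a simplex lying in no pair is called critical. $W$ is acyclic if the directed graph obtained from $\mathcal{H}(K)$ by reversing every edge in $W$ has no directed cycle. An acyclic matching is optimal if it minimizes the total number of critical simplices among all acyclic matchings on $K$. *)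

From mathcomp Require Import all_boot.
Set Implicit Arguments. Unset Strict Implicit. Unset Printing Implicit Defensive.

(* Simplices are nonempty finite subsets of a finite vertex type T;
   a simplicial complex is a set K : {set {set T}} of simplices.
   dim s = #|s| - 1. *)

Section Morse.
Variable T : finType.
Implicit Types (K : {set {set T}}) (W : {set {set T} * {set T}}).

Definition hasse_edge K (s t : {set T}) : bool :=
  [&& s \in K, t \in K, s \proper t & #|t| == #|s|.+1].

Definition is_matching K W : Prop :=
  (forall p, p \in W -> hasse_edge K p.1 p.2) /\
  (forall p q, p \in W -> q \in W -> p != q ->
     [/\ p.1 != q.1, p.1 != q.2, p.2 != q.1 & p.2 != q.2]).

Definition modified_rel K W : rel {set T} :=
  fun x y => (hasse_edge K x y && ((x, y) \notin W)) ||
             (hasse_edge K y x && ((y, x) \in W)).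

Definition is_acyclic K W : Prop :=
  forall x y, modified_rel K W x y -> ~~ connect (modified_rel K W) y x.

Definition is_acyclic_matching K W : Prop := is_matching K W /\ is_acyclic K W.

Definition critical K W : {set {set T}} :=
  [set s in K | [forall p in W, (p.1 != s) && (p.2 != s)]].

Definition is_optimal K W : Prop :=
  is_acyclic_matching K W /\
  forall W', is_acyclic_matching K W' -> #|critical K W| <= #|critical K W'|.

End Morse.

Definition simplex_complex (n : nat) : {set {set 'I_n.+1}} :=
  [set s : {set 'I_n.+1} | s != set0].

Definition simplex_skeleton (n k : nat) : {set {set 'I_n.+1}} :=
  [set s : {set 'I_n.+1} | (s != set0) && (#|s| <= k.+1)].

Definition restrict_pairs (n k : nat) (V : {set {set 'I_n.+1} * {set 'I_n.+1}}) :=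
  [set p in V | #|p.2| <= k.+1].
Arguments restrict_pairs n k V : clear implicits.

From mathcomp Require Import all_boot zify.
Set Implicit Arguments. Unset Strict Implicit. Unset Printing Implicit Defensive.

(* An optimal acyclic matching V of Delta^n leaves exactly one cell critical: the
   cone matching from a vertex leaves one, and every acyclic matching leaves some
   vertex critical.  Keeping only the pairs of V inside the (n-2)-skeleton gives an
   acyclic matching there, whose new critical cells are the lower faces of the pairs
   whose upper face is a facet.  Of the n+1 facets, one is the lower face of the
   pair containing the top simplex; the other n are upper faces of such pairs, so
   the restriction has one critical vertex and n critical (n-2)-cells.  It is
   optimal because the alternating count of critical cells is the Euler
   characteristic, and any acyclic matching of the skeleton has a critical vertex. *)

Section MorseMatchings.
Variable T : finType.
Implicit Types (K : {set {set T}}) (W : {set {set T} * {set T}}) (s t : {set T}).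

Lemma criticalP K W s :
  reflect (s \in K /\ forall p, p \in W -> p.1 != s /\ p.2 != s) (s \in critical K W).
Proof.
rewrite inE; apply: (iffP andP) => [[sK /forall_inP crit]|[sK crit]]; split => //.
  by move=> p /crit /andP.
by apply/forall_inP => p /crit [-> ->].
Qed.

Lemma not_critical_matched K W s : s \in K -> s \notin critical K W ->
  exists2 p, p \in W & (p.1 == s) || (p.2 == s).
Proof.
move=> sK; rewrite inE sK /= => /forall_inPn [p pW].
by rewrite negb_and !negbK; exists p.
Qed.

Lemma hasse_edge_card K s t : hasse_edge K s t -> #|t| = #|s|.+1.
Proof. by case/and4P => _ _ _ /eqP. Qed.

Lemma matching_eq K W p q : is_matching K W -> p \in W -> q \in W ->
  [|| p.1 == q.1, p.1 == q.2, p.2 == q.1 | p.2 == q.2] -> p = q.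
Proof.
move=> [_ disj] pW qW; apply: contraTeq => pq.
by have [/negbTE-> /negbTE-> /negbTE-> /negbTE->] := disj p q pW qW pq.
Qed.

Lemma matching_fst_inj K W : is_matching K W -> {in W &, injective fst}.
Proof. by move=> matchW p q pW qW pq; apply: matching_eq matchW pW qW _; rewrite pq eqxx. Qed.

Lemma matching_snd_inj K W : is_matching K W -> {in W &, injective snd}.
Proof. by move=> matchW p q pW qW pq; apply: matching_eq matchW pW qW _; rewrite pq eqxx !orbT. Qed.

Lemma acyclic_potential K W (g : {set T} -> nat) :
  (forall s t, modified_rel K W s t -> g s < g t) -> is_acyclic K W.
Proof.
move=> g_lt s t /g_lt st; apply/negP => /connectP [path_ts path_ok last_s].
suff : g t <= g s by rewrite leqNgt st.
elim: path_ts t {st} path_ok last_s => [|u path_ts IH] t /=; first by move=> _ ->.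
by case/andP => /g_lt tu /IH le_us /le_us; apply: leq_trans (ltnW tu).
Qed.

Definition critical_parity K W b := [set s in critical K W | odd #|s| == b].

Definition parity_end b (p : {set T} * {set T}) := if odd #|p.1| == b then p.1 else p.2.

Lemma parity_end_in b p : (p.1 == parity_end b p) || (p.2 == parity_end b p).
Proof. by rewrite /parity_end; case: ifP; rewrite eqxx ?orbT. Qed.

Lemma parity_endE K b p s : hasse_edge K p.1 p.2 -> (p.1 == s) || (p.2 == s) ->
  (parity_end b p == s) = (odd #|s| == b).
Proof.
move/hasse_edge_card => card_p2; rewrite /parity_end.
have p12 : p.1 != p.2 by apply/eqP => E; move: card_p2; rewrite E => /n_Sn.
case/orP => /eqP <-; case: ifP => [p1_b|p1_nb]; rewrite ?eqxx //.
- by rewrite eq_sym (negbTE p12).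
- by move: p1_b; rewrite (negbTE p12) card_p2 /=; case: b; case: odd.
- by move: p1_nb; rewrite card_p2 /=; case: b; case: odd.
Qed.

Lemma card_parity_cells K W b : is_matching K W ->
  #|[set s in K | odd #|s| == b]| = #|critical_parity K W b| + #|W|.
Proof.
move=> matchW; have [edgeW _] := matchW.
have endE p s : p \in W -> (p.1 == s) || (p.2 == s) ->
    (parity_end b p == s) = (odd #|s| == b) := fun pW => parity_endE b (edgeW p pW).
have end_inj : {in W &, injective (parity_end b)}.
  move=> p q pW qW pq; apply: (matching_eq matchW pW qW).
  by case/orP: (parity_end_in b p) => /eqP ->; case/orP: (parity_end_in b q) => /eqP ->;
    rewrite pq eqxx ?orbT.
rewrite -(cardsID (critical K W)) -(card_in_imset end_inj); congr (_ + _).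
  apply/eq_card => s; rewrite !inE.
  by case: (s \in K); case: (odd _ == b); rewrite /= ?andbT ?andbF.
apply/eq_card => s; rewrite in_setD [X in _ && X]inE.
apply/idP/imsetP => [/and3P [s_matched sK s_b]|[p pW ->]].
  have [p pW ps] := not_critical_matched sK s_matched.
  by exists p => //; apply/esym/eqP; rewrite endE.
have end_p : odd #|parity_end b p| == b by rewrite -(endE p) ?eqxx ?parity_end_in.
have end_K : parity_end b p \in K.
  by case/orP: (parity_end_in b p) => /eqP <-; case/and4P: (edgeW p pW).
rewrite end_K end_p !andbT; apply/negP => /criticalP [_ /(_ p pW) [ne1 ne2]].
by case/orP: (parity_end_in b p); rewrite ?(negbTE ne1) ?(negbTE ne2).
Qed.

Lemma card_critical_parity K W b :
  #|critical K W| = #|critical_parity K W b| + #|critical_parity K W (~~ b)|.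
Proof.
rewrite -(cardsID [set x : {set T} | odd #|x| == b] (critical K W)); congr (_ + _).
  by apply/eq_card => s; rewrite !inE andbC.
by apply/eq_card => s; rewrite !inE andbC; case: b; case: odd.
Qed.

(* The alternating count of critical cells is the Euler characteristic of K. *)
Lemma card_critical_exchange K W W' b : is_matching K W -> is_matching K W' ->
  #|critical K W'| + #|critical_parity K W b|.*2 =
  #|critical K W| + #|critical_parity K W' b|.*2.
Proof.
move=> matchW matchW'.
have := card_parity_cells b matchW; have := card_parity_cells (~~ b) matchW.
have := card_parity_cells b matchW'; have := card_parity_cells (~~ b) matchW'.
rewrite (card_critical_parity K W b) (card_critical_parity K W' b); lia.
Qed.

Lemma matched_vertex K W v : set0 \notin K -> is_matching K W -> [set v] \in K ->
  [set v] \notin critical K W -> exists2 w, w != v & ([set v], [set v; w]) \in W.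
Proof.
move=> K0 [edgeW _] vK /(not_critical_matched vK) [p pW].
have [p1K _ /properP [p12 _] /eqP card_p2] := and4P (edgeW p pW).
case/orP => /eqP p_v; last first.
  by move: card_p2 p1K; rewrite p_v cards1 => -[/esym/cards0_eq ->]; rewrite (negbTE K0).
have v_p2 : v \in p.2 by rewrite (subsetP p12) // p_v set11.
have /cards1P [w p2_w] : #|p.2 :\ v| == 1.
  by move: card_p2; rewrite (cardsD1 v p.2) v_p2 p_v cards1 add1n => -[->].
have /setD1P [wv _] : w \in p.2 :\ v by rewrite p2_w set11.
by exists w; rewrite // -p2_w setD1K // -p_v -surjective_pairing.
Qed.

(* Otherwise every vertex v is matched with an edge {v, g v}, giving the path
   [set g v] -> {v, g v} -> [set v]; the set of vertices reaching v would then
   shrink strictly from v to g v, for every v. *)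
Lemma critical_vertex K W (v0 : T) : set0 \notin K -> (forall v, [set v] \in K) ->
  is_acyclic_matching K W -> exists v, [set v] \in critical K W.
Proof.
move=> K0 K1 [matchW acycW]; apply/existsP; apply: contraT => /existsPn no_crit.
have [g gv gW] := fin_all_exists2 (fun v => matched_vertex K0 matchW (K1 v) (no_crit v)).
pose E := modified_rel K W.
have edge_v v : hasse_edge K [set v] [set v; g v] := matchW.1 _ (gW v).
have up v : E [set g v] [set v; g v].
  apply/orP; left; have [_ edgeK _ _] := and4P (edge_v v).
  rewrite /hasse_edge K1 edgeK properEcard sub1set !inE eqxx orbT cards1 cards2.
  rewrite [v == _]eq_sym gv /=; apply/negP => /(matching_eq matchW (gW v)).
  by rewrite /= eqxx !orbT => /(_ isT) [/set1_inj g_v]; move: (gv v); rewrite -g_v eqxx.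
have down v : E [set v; g v] [set v] by rewrite /E /modified_rel gW edge_v orbT.
have no_return v : ~~ connect E [set v] [set g v].
  by apply: contra (acycW _ _ (up v)); apply: connect_trans (connect1 (down v)).
pose D v := [set u | connect E [set u] [set v]].
have D_proper v : D (g v) \proper D v.
  apply/properP; split; last by exists v; rewrite !inE ?connect0 ?no_return.
  apply/subsetP => u; rewrite !inE => /connect_trans; apply.
  exact: connect_trans (connect1 (up v)) (connect1 (down v)).
have [m _ min_m] := arg_minnP (fun v => #|D v|) (isT : xpredT v0).
by have := min_m (g m) isT; rewrite leqNgt proper_card.
Qed.

Definition restrict_matching K' W := [set p in W | p.2 \in K'].

Lemma restrict_acyclic_matching K K' W : K' \subset K ->
  (forall s t, hasse_edge K s t -> t \in K' -> s \in K') ->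
  is_acyclic_matching K W -> is_acyclic_matching K' (restrict_matching K' W).
Proof.
move=> subK K'_closed [[edgeW disjW] acycW]; set W' := restrict_matching K' W.
have edgeK s t : hasse_edge K' s t -> hasse_edge K s t.
  by case/and4P => sK' tK' st card_t; rewrite /hasse_edge !(subsetP subK) ?st ?card_t.
have sub_rel : subrel (modified_rel K' W') (modified_rel K W).
  move=> s t /orP [/andP [st stW']|/andP [ts tsW']]; apply/orP; [left|right].
    rewrite edgeK //=; apply: contra stW' => stW; rewrite inE stW.
    by case/and4P: st.
  by rewrite edgeK //; move: tsW'; rewrite inE => /andP [].
split; first split.
- move=> p; rewrite inE => /andP [/edgeW p_edge p2K'].
  by rewrite /hasse_edge p2K' (K'_closed _ _ p_edge) //; case/and4P: p_edge => _ _ -> ->.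
- by move=> p q; rewrite !inE => /andP [pW _] /andP [qW _]; apply: disjW.
move=> s t /sub_rel st; apply: contra (acycW _ _ st); apply: connect_sub.
by move=> u w /sub_rel /connect1.
Qed.

Lemma critical_restrict_matching K K' W : K' \subset K -> is_matching K W ->
  critical K' (restrict_matching K' W) =
  K' :&: (critical K W :|: [set p.1 | p in W & p.2 \notin K']).
Proof.
move=> subK matchW; apply/setP => s; rewrite in_setI in_setU.
apply/criticalP/andP => [[sK' s_free]|[sK' s_crit]]; split => //.
  case: (boolP (s \in critical K W)) => //= /(not_critical_matched (subsetP subK _ sK')).
  case=> p pW ps; have p2K' : p.2 \notin K'.
    apply/negP => p2K'; have /s_free [ne1 ne2] : p \in restrict_matching K' W.
      by rewrite inE pW.
    by case/orP: ps; rewrite ?(negbTE ne1) ?(negbTE ne2).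
  apply/imsetP; exists p; first by rewrite inE pW.
  by case/orP: ps => /eqP // p2s; rewrite p2s sK' in p2K'.
move=> q; rewrite inE => /andP [qW q2K'].
case/orP: s_crit => [/criticalP [_ /(_ q qW)] //|/imsetP [p]].
rewrite inE => /andP [pW p2K'] ->.
have qp : q != p by apply: contraNneq p2K' => <-.
by have [? _ ? _] := matchW.2 q p qW pW qp.
Qed.

End MorseMatchings.

Section FullSimplex.
Variable n : nat.
Implicit Types (s t : {set 'I_n.+1}) (V : {set {set 'I_n.+1} * {set 'I_n.+1}}).

Lemma simplex_complexE s : (s \in simplex_complex n) = (s != set0).
Proof. by rewrite inE. Qed.

Lemma simplex_complex_vertex v : [set v] \in simplex_complex n.
Proof. by rewrite simplex_complexE; apply/set0Pn; exists v; rewrite set11. Qed.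

Lemma simplex_card_full s : (#|s| == n.+1) = (s == setT).
Proof.
by rewrite eqEcard subsetT cardsT card_ord eqn_leq; have := max_card s; rewrite card_ord => ->.
Qed.

Definition cone : {set {set 'I_n.+1} * {set 'I_n.+1}} :=
  [set (s, ord0 |: s) | s in [set s | (s != set0) && (ord0 \notin s)]].

Lemma coneP p : reflect (exists2 s, (s != set0) && (ord0 \notin s) & p = (s, ord0 |: s))
  (p \in cone).
Proof. by apply: (iffP imsetP) => [[s]|[s]] sP ->; exists s; rewrite // inE in sP *. Qed.

Lemma cone_matching : is_matching (simplex_complex n) cone.
Proof.
split.
  move=> p /coneP [s /andP [s0 s0n] ->] /=.
  rewrite /hasse_edge !simplex_complexE s0 properEcard subsetUr cardsU1 s0n add1n.
  rewrite ltnSn eqxx !andbT /=.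
  by apply/set0Pn; exists ord0; rewrite setU11.
move=> p q /coneP [s /andP [_ s0n] ->] /coneP [t /andP [_ t0n] ->] /= pq.
have st : s != t by apply: contraNneq pq => ->.
split => //.
- by apply: contraNneq s0n => ->; rewrite setU11.
- by apply: contraNneq t0n => <-; rewrite setU11.
- apply: contraNneq st => /setP st; apply/eqP/setP => x; have := st x; rewrite !inE.
  by case: eqP => [->|] //=; rewrite (negbTE s0n) (negbTE t0n).
Qed.

Lemma cone_acyclic : is_acyclic (simplex_complex n) cone.
Proof.
apply: (@acyclic_potential _ _ _ (fun s => #|s| + (ord0 \notin s).*2)).
move=> s t /orP [/andP [/and4P [sK _ /properP [st _] /eqP card_t] st_cone]|].
  suff -> : (ord0 \notin t) = (ord0 \notin s) by rewrite card_t.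
  case: (boolP (ord0 \in s)) => [/(subsetP st) -> //|s0]; apply/negP => t0.
  move/negP: st_cone; apply; apply/coneP; exists s; first by rewrite -simplex_complexE sK.
  congr (_, _); apply/eqP; rewrite eq_sym eqEcard card_t cardsU1 s0.
  by rewrite subUset sub1set t0 st leqnn.
case/andP => _ /coneP [u /andP [_ u0] [-> ->]].
rewrite cardsU1 setU11 u0 /=; lia.
Qed.

Lemma card_critical_cone : #|critical (simplex_complex n) cone| <= 1.
Proof.
rewrite -(cards1 [set ord0 : 'I_n.+1]).
apply/subset_leq_card/subsetP => s /criticalP [sK s_free].
rewrite inE; have s_ne0 : s != set0 by rewrite -simplex_complexE.
case: (boolP (ord0 \in s)) => s0; last first.
  have : (s, ord0 |: s) \in cone by apply/coneP; exists s; rewrite ?s_ne0 ?s0.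
  by case/s_free => /eqP [].
apply/eqP/setP => x; rewrite inE; apply/idP/eqP => [xs|->//].
apply/eqP; apply: contraT => x0.
have : (s :\ ord0, s) \in cone.
  apply/coneP; exists (s :\ ord0); last by rewrite setD1K.
  by rewrite !inE eqxx andbT; apply/set0Pn; exists x; rewrite !inE x0.
by case/s_free => _ /eqP [].
Qed.

Lemma optimal_simplex_critical V : is_optimal (simplex_complex n) V ->
  exists v, critical (simplex_complex n) V = [set [set v]].
Proof.
case=> acycV minV.
have Delta0 : set0 \notin simplex_complex n by rewrite simplex_complexE eqxx.
have [v v_crit] := critical_vertex ord0 Delta0 simplex_complex_vertex acycV.
exists v; apply/eqP; rewrite eq_sym eqEcard sub1set v_crit cards1.
exact: leq_trans (minV _ (conj cone_matching cone_acyclic)) card_critical_cone.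
Qed.

Lemma skeleton_sub k : simplex_skeleton n k \subset simplex_complex n.
Proof. by apply/subsetP => s; rewrite !inE => /andP []. Qed.

Lemma skeleton_closed k s t : hasse_edge (simplex_complex n) s t ->
  t \in simplex_skeleton n k -> s \in simplex_skeleton n k.
Proof.
case/and4P => sK _ _ /eqP card_t; rewrite !inE card_t => /andP [_ /ltnW ->].
by rewrite -simplex_complexE sK.
Qed.

Lemma restrict_pairsE k V : is_matching (simplex_complex n) V ->
  restrict_pairs n k V = restrict_matching (simplex_skeleton n k) V.
Proof.
move=> [edgeV _]; apply/setP => p; rewrite !inE.
case pV: (p \in V) => //=; have [_ + _ _] := and4P (edgeV p pV).
by rewrite simplex_complexE => ->.
Qed.

Section OptimalMatching.
Variables (V : {set {set 'I_n.+1} * {set 'I_n.+1}}) (v : 'I_n.+1).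
Hypothesis acycV : is_acyclic_matching (simplex_complex n) V.
Hypothesis critV : critical (simplex_complex n) V = [set [set v]].
Hypothesis n_gt2 : 2 < n.

Let matchV : is_matching (simplex_complex n) V := acycV.1.
Let n_gt1 : 1 < n := ltnW n_gt2.

Lemma pair_card p : p \in V -> #|p.2| = #|p.1|.+1.
Proof. by move/matchV.1/hasse_edge_card. Qed.

Lemma matched_simplex s : s != set0 -> s != [set v] ->
  exists2 p, p \in V & (p.1 == s) || (p.2 == s).
Proof.
rewrite -simplex_complexE => sK sv; apply: not_critical_matched sK _.
by rewrite critV in_set1.
Qed.

Lemma full_pair : exists2 p, p \in V & p.2 = setT.
Proof.
have [||p pV pT] := matched_simplex (s := setT).
- by apply/set0Pn; exists ord0.
- apply/eqP => /(congr1 (fun s => #|s|)).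
  by rewrite cards1 cardsT card_ord => -[n0]; move: n_gt1; rewrite n0.
case/orP: pT => /eqP pT; last by exists p.
by have := max_card p.2; rewrite card_ord pair_card // pT cardsT card_ord ltnn.
Qed.

Lemma card_facet_pairs : #|[set p in V | #|p.2| == n]| = n.
Proof.
have [p0 p0V p0T] := full_pair.
have p0_facet : #|p0.1| == n by rewrite -eqSS -(pair_card p0V) p0T cardsT card_ord.
have facetsE : [set p.2 | p in [set p in V | #|p.2| == n]] =
               [set s : {set 'I_n.+1} | #|s| == n] :\ p0.1.
  apply/setP => s; rewrite !inE; apply/imsetP/andP => [[p]|[s_p0 s_n]].
    rewrite inE => /andP [pV p_n] ->; split => //.
    apply: contraTneq p_n => p2_p0; rewrite (matching_eq matchV pV p0V) ?p2_p0 ?eqxx ?orbT //.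
    by rewrite p0T cardsT card_ord (gtn_eqF (ltnSn n)).
  have [||p pV ps] := matched_simplex (s := s).
  - by rewrite -card_gt0 (eqP s_n) (ltnW n_gt1).
  - by apply: contraTneq s_n => ->; rewrite cards1 (ltn_eqF n_gt1).
  case/orP: ps => /eqP ps; last by exists p; rewrite // inE pV ps.
  have pT : p.2 = setT by apply/eqP; rewrite -simplex_card_full pair_card // ps (eqP s_n).
  by move: s_p0; rewrite -ps (matching_eq matchV pV p0V) ?pT ?p0T ?eqxx ?orbT.
have snd_inj : {in [set p in V | #|p.2| == n] &, injective snd}.
  by apply: sub_in2 (matching_snd_inj matchV) => p; rewrite inE => /andP [].
rewrite -(card_in_imset snd_inj) facetsE.
have := cardsD1 p0.1 [set s : {set 'I_n.+1} | #|s| == n].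
by rewrite card_draws card_ord binSn inE p0_facet add1n => -[].
Qed.

Definition critical_ridges := [set p.1 | p in V & #|p.2| == n].

Lemma card_critical_ridges : #|critical_ridges| = n.
Proof.
rewrite card_in_imset ?card_facet_pairs //.
by apply: sub_in2 (matching_fst_inj matchV) => p; rewrite inE => /andP [].
Qed.

Lemma critical_ridge_card s : s \in critical_ridges -> #|s| = n.-1.
Proof.
by case/imsetP => p; rewrite inE => /andP [pV /eqP p_n] ->; rewrite -[in RHS]p_n pair_card.
Qed.

Lemma vertex_notin_critical_ridges : [set v] \notin critical_ridges.
Proof.
apply/negP => /imsetP [p]; rewrite inE => /andP [pV _] v_p.
have /criticalP [_ /(_ p pV) []] : [set v] \in critical (simplex_complex n) V.
  by rewrite critV set11.
by rewrite v_p eqxx.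
Qed.

Local Notation K := (simplex_skeleton n (n - 2)).

Lemma critical_skeleton : critical K (restrict_matching K V) = [set v] |: critical_ridges.
Proof.
rewrite (critical_restrict_matching (skeleton_sub _) matchV) critV; apply/setP => s.
rewrite in_setI in_setU in_set1 in_setU1; case: eqVneq => [->|_] /=.
  by rewrite !inE cards1 -simplex_complexE simplex_complex_vertex.
have pair_ne0 p : p \in V -> (p.1 != set0) && (p.2 != set0).
  by move/matchV.1; rewrite /hasse_edge !simplex_complexE => /and4P [-> ->].
rewrite /critical_ridges; apply/andP/imsetP => [[sK /imsetP [p]]|[p]]; rewrite !inE.
  move=> /andP [pV p2K] s_p; exists p; rewrite // inE pV /=.
  move: sK p2K; rewrite s_p !inE pair_card //.
  by case/andP: (pair_ne0 p pV) => -> -> /=; lia.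
move=> /andP [pV /eqP p_n] ->; have := pair_card pV.
case/andP: (pair_ne0 p pV) => p1_ne0 p2_ne0 card_p2.
split; last by apply/imsetP; exists p; rewrite // !inE pV p2_ne0 p_n -ltnNge; lia.
by rewrite p1_ne0 -ltnS -card_p2 p_n; lia.
Qed.

Lemma critical_ridge_odd s : s \in critical_ridges -> odd #|s| = ~~ odd n.
Proof. by move/critical_ridge_card ->; rewrite -[in RHS](ltn_predK n_gt1) /= negbK. Qed.

Lemma skeleton_optimal : is_optimal K (restrict_matching K V).
Proof.
have acycW := restrict_acyclic_matching (skeleton_sub (n - 2)) (@skeleton_closed _) acycV.
split => // W' acycW'.
have [v' v'_crit] : exists v', [set v'] \in critical K W'.
  apply: critical_vertex ord0 _ _ acycW'; first by rewrite !inE eqxx.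
  by move=> u; rewrite !inE cards1 -simplex_complexE simplex_complex_vertex.
(* Only the critical vertex has parity [odd n], and only when n is odd. *)
have := card_critical_exchange (odd n) acycW.1 acycW'.1.
have -> : #|critical K (restrict_matching K V)| = n.+1.
  by rewrite critical_skeleton cardsU1 vertex_notin_critical_ridges card_critical_ridges.
have -> : critical_parity K (restrict_matching K V) (odd n) =
          if odd n then [set [set v]] else set0.
  apply/setP => s; rewrite inE critical_skeleton in_setU1.
  case: eqVneq => [->|sv] /=.
    by rewrite cards1; case: (odd n); rewrite ?set11 ?in_set0.
  case: (boolP (s \in critical_ridges)) => [/critical_ridge_odd ->|_];
    by case: (odd n); rewrite ?in_set1 ?in_set0 ?(negbTE sv).
have : odd n <= #|critical_parity K W' (odd n)|.
  case: odd => //; rewrite card_gt0; apply/set0Pn.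
  by exists [set v']; rewrite inE v'_crit cards1.
by case: odd; rewrite ?cards1 ?cards0; lia.
Qed.

Lemma critical_skeleton_vertices :
  [set s in critical K (restrict_matching K V) | #|s| == 1] = [set [set v]].
Proof.
apply/setP => s; rewrite critical_skeleton !inE.
case: eqVneq => [->|_] /=; first by rewrite cards1.
by apply/negP => /andP [/critical_ridge_card ->]; lia.
Qed.

Lemma critical_skeleton_ridges :
  [set s in critical K (restrict_matching K V) | #|s| == (n - 2).+1] = critical_ridges.
Proof.
apply/setP => s; rewrite critical_skeleton !inE; case: eqVneq => [->|_] /=.
  by rewrite cards1 (negbTE vertex_notin_critical_ridges); lia.
by case: (boolP (s \in critical_ridges)) => // /critical_ridge_card ->; lia.
Qed.

End OptimalMatching.

End FullSimplex.

Theorem mainTheorem4 (n : nat) (V : {set {set 'I_n.+1} * {set 'I_n.+1}}) :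
  3 <= n ->
  is_optimal (simplex_complex n) V ->
  let K := simplex_skeleton n (n - 2) in
  let W := restrict_pairs n (n - 2) V in
  [/\ is_optimal K W,
      #|[set s in critical K W | #|s| == 1]| = 1,
      #|[set s in critical K W | #|s| == (n - 2).+1]| = n
    & forall s, s \in critical K W -> (#|s| == 1) || (#|s| == (n - 2).+1)].
Proof.
move=> n_gt2 optV K W; have [acycV _] := optV.
have [v critV] := optimal_simplex_critical optV.
have -> : W = restrict_matching K V := restrict_pairsE (n - 2) acycV.1.
rewrite (critical_skeleton_vertices acycV critV n_gt2) cards1.
rewrite (critical_skeleton_ridges acycV critV n_gt2) (card_critical_ridges acycV critV n_gt2).
split => //; first exact: (skeleton_optimal acycV critV n_gt2).
move=> s; rewrite (critical_skeleton acycV critV n_gt2) in_setU1.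
case/orP => [/eqP ->|/(critical_ridge_card acycV) ->]; rewrite ?cards1 //; lia.
Qed.
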